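(* Let $K$ be a field, $\nu$ a valuation on $K[x]$, and $Q,Q'$ key polynomials for $\nu$ with $\epsilon(Q)\le\epsilon(Q')$. Then for every $f\in K[x]$, if $\nu_Q(f)=\nu(f)$ then $\nu_{Q'}(f)=\nu(f)$.
   Context: $\nu:K[x]\to\Gamma\cup\{\infty\}$ is a valuation ($\Gamma$ an ordered abelian group) with $\nu(f)=\infty$ only for $f=0$; $\Gamma'=\Gamma\otimes\mathbb{Q}$. For $k\in\mathbb{N}$, $\partial_kf=\frac{1}{k!}\frac{d^kf}{dx^k}$. For nonconstant $f$, $\epsilon(f)=\max\{(\nu(f)-\nu(\partial_kf))/k\mid 1\le k\le\deg f,\ \partial_kf\ne0\}\in\Gamma'$. A key polynomial is a monic nonconstant $Q\in K[x]$ such that every nonconstant $f\in K[x]$ with $\epsilon(f)\ge\epsilon(Q)$ satisfies $\deg f\ge\deg Q$. For monic nonconstant $Q$, the $Q$-expansion of $f$ is the unique expression $f=f_0+f_1Q+\dots+f_nQ^n$ with each $f_i=0$ or $\deg f_i<\deg Q$, and $\nu_Q(f)=\min_i\nu(f_iQ^i)$ (the $Q$-truncation of $\nu$). *)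

From mathcomp Require Import all_boot all_order all_algebra.
Set Implicit Arguments. Unset Strict Implicit. Unset Printing Implicit Defensive.
Import GRing.Theory.
Local Open Scope ring_scope.

Record is_oag (G : zmodType) (le : rel G) : Prop := {
  oag_refl : forall a, le a a;
  oag_antisym : forall a b, le a b -> le b a -> a = b;
  oag_trans : forall a b c, le a b -> le b c -> le a c;
  oag_total : forall a b, le a b || le b a;
  oag_add : forall a b c, le a b -> le (a + c) (b + c) }.

(* Since nu(f) = oo exactly for f = 0, we
   represent nu by its (G-valued) restriction to nonzero polynomials; the value
   nu 0 is irrelevant (see nuext, which sends 0 to None = oo). *)
Record is_valuation (K : fieldType) (G : zmodType) (le : rel G)
    (nu : {poly K} -> G) : Prop := {
  val_mul : forall f g, f != 0 -> g != 0 -> nu (f * g) = nu f + nu g;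
  val_add : forall f g, f != 0 -> g != 0 -> f + g != 0 ->
     le (nu f) (nu (f + g)) || le (nu g) (nu (f + g)) }.

Section Defs.
Variables (K : fieldType) (G : zmodType) (le : rel G) (nu : {poly K} -> G).

(* nu with values in G u {oo}, None standing for oo. *)
Definition nuext (f : {poly K}) : option G := if f == 0 then None else Some (nu f).

Definition minG (a b : G) : G := if le a b then a else b.

(* Elements of Gamma' = Gamma (x) Q of the form a/k (k > 0) are represented by
   pairs (a, k); a/k <= b/j  iff  j*a <= k*b. *)
Definition frac_le (x y : G * nat) : bool := le (x.1 *+ y.2) (y.1 *+ x.2).

(* the candidates (nu f - nu (d_k f))/k, 1 <= k <= deg f, d_k f != 0,
   where d_k f = f^`N(k) is the k-th derivative divided by k! *)
Definition eps_cands (f : {poly K}) : seq (G * nat) :=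
  [seq (nu f - nu (f^`N(k)), k) | k <- iota 1 (size f).-1 & f^`N(k) != 0].

(* eps f <= eps g  (eps = max of the candidates), for nonconstant f, g. *)
Definition eps_le (f g : {poly K}) : Prop :=
  exists2 y, y \in eps_cands g & forall x, x \in eps_cands f -> frac_le x y.

Definition key_poly (Q : {poly K}) : Prop :=
  Q \is monic /\ (1 < size Q)%N /\
  forall f : {poly K}, (1 < size f)%N -> eps_le Q f -> (size Q <= size f)%N.

(* i-th coefficient of the Q-expansion f = sum_i f_i Q^i (deg f_i < deg Q) *)
Definition qcoef (Q f : {poly K}) (i : nat) : {poly K} := (f %/ Q ^+ i) %% Q.

(* the Q-truncation nu_Q(f) = min_i nu(f_i Q^i) (None = oo when f = 0) *)
Definition nuQ (Q f : {poly K}) : option G :=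
  foldr (fun g acc => Some (match acc with None => nu g | Some a => minG (nu g) a end))
    None [seq qcoef Q f i * Q ^+ i | i <- iota 0 (size f) & qcoef Q f i != 0].

End Defs.

(* Write "trunc_ge P c f" for "every term f_i P^i of the P-expansion of f has
   value >= c", i.e. nu_P(f) >= c.  Since nu_P(f) <= nu(f) always, the claim
   reduces to transporting the bound trunc_ge Q (nu f) f to Q'.  This rests on
   two properties of a key polynomial P, both derived from the extremality of
   eps(P) = (nu P - nu d_b P)/b with respect to polynomials of degree < deg P
   (the "digits" of P-expansions):
   - for digits u, v, writing uv = qP + r gives nu(qP) > nu(uv), hence
     nu(r) = nu(uv); consequently nu_P is super-multiplicative:
     trunc_ge P c f -> trunc_ge P d g -> trunc_ge P (c + d) (fg);
   - perturbing P by a digit of smaller value strictly lowers epsilon; this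
     yields trunc_ge Q' (nu Q) Q when eps(Q) <= eps(Q').
   Expanding f = sum f_i Q^i and applying both facts gives the transfer. *)
From mathcomp Require Import all_boot all_order all_algebra zify.
Set Implicit Arguments. Unset Strict Implicit. Unset Printing Implicit Defensive.
Import GRing.Theory.
Local Open Scope ring_scope.

(* Leibniz rule for d_k = f^`N(k), obtained from the Taylor expansion
   f(x + y) = sum_k d_k f(x) y^k, which is multiplicative in f. *)
Section Leibniz.
Variable K : fieldType.

Definition taylor (p : {poly K}) : {poly {poly K}} :=
  (map_poly polyC (map_poly polyC p)).['X%:P + 'X].

Lemma coef_taylor p i : (taylor p)`_i = p^`N(i).
Proof.
have -> : taylor p = \poly_(i < size p) p^`N(i).
  rewrite /taylor nderiv_taylor; last exact: mulrC.
  rewrite !size_map_polyC poly_def; apply: eq_bigr => j _.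
  rewrite !nderivn_map -mul_polyC; congr (_ * _).
  by rewrite horner_map /= -/(comp_poly _ _) comp_polyXr.
by rewrite coef_poly; case: ltnP => // h; rewrite nderivn_poly0.
Qed.

Lemma nderivnM (p q : {poly K}) k :
  (p * q)^`N(k) = \sum_(j < k.+1) p^`N(j) * q^`N(k - j).
Proof.
rewrite -coef_taylor /taylor !rmorphM hornerM -/(taylor p) -/(taylor q) coefM.
by apply: eq_bigr => j _; rewrite !coef_taylor.
Qed.
End Leibniz.

Lemma size_monic_sub (K : fieldType) (p q : {poly K}) :
  p \is monic -> q \is monic -> size p = size q -> (size (p - q)%R < size q)%N.
Proof.
move=> /monicP pm /monicP qm e; have q0 : (0 < size q)%N.
  by rewrite size_poly_gt0 -lead_coef_eq0 qm oner_neq0.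
rewrite -(prednK q0) ltnS; apply/leq_sizeP => j hj; rewrite coefB.
case: (ltngtP j (size q).-1) => hj'.
- by move: hj; rewrite leqNgt hj'.
- have sq : (size q <= j)%N by rewrite -(prednK q0).
  by rewrite !nth_default ?e ?subrr.
- by move: pm qm; rewrite /lead_coef e -hj' => -> ->; rewrite subrr.
Qed.

Section Expansion.
Variables (K : fieldType) (P : {poly K}).
Hypothesis P_gt1 : (1 < size P)%N.

Lemma P_neq0 : P != 0.
Proof. by rewrite -size_poly_gt0 ltnW. Qed.

Lemma expP_neq0 n : P ^+ n != 0.
Proof. by rewrite expf_neq0 // P_neq0. Qed.

Lemma size_expP n : size (P ^+ n) = ((size P).-1 * n).+1.
Proof. by rewrite -size_exp prednK // size_poly_gt0 expP_neq0. Qed.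

Lemma qcoefD f g i : qcoef P (f + g) i = qcoef P f i + qcoef P g i.
Proof. by rewrite /qcoef divpD modpD. Qed.

Lemma qcoef0 i : qcoef P 0 i = 0.
Proof. by rewrite /qcoef div0p mod0p. Qed.

Lemma size_qcoef f i : (size (qcoef P f i) < size P)%N.
Proof. by rewrite /qcoef ltn_modp P_neq0. Qed.

Lemma qcoefS f i : qcoef P f i.+1 = qcoef P (f %/ P) i.
Proof. by rewrite /qcoef exprS divp_divl. Qed.

Lemma qcoef_monomial (a : {poly K}) n i : (size a < size P)%N ->
  qcoef P (a * P ^+ n) i = if i == n then a else 0.
Proof.
move=> a_small; rewrite /qcoef; case: (ltngtP i n) => hin.
- have -> : a * P ^+ n = (a * P ^+ (n - i).-1 * P) * P ^+ i.
    rewrite -[a * _ * P]mulrA -exprSr prednK ?subn_gt0 //.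
    by rewrite -mulrA -exprD subnK // ltnW.
  by rewrite mulpK ?expP_neq0 // modp_mull.
- have [->|a0] := eqVneq a 0; first by rewrite mul0r div0p mod0p.
  rewrite divp_small ?mod0p // size_mul ?expP_neq0 // !size_expP.
  by move: a_small hin P_gt1; move: (size a) (size P) => n1 n2; nia.
- by rewrite hin mulpK ?expP_neq0 // modp_small.
Qed.

Lemma qcoef_eq0 (f : {poly K}) i : (size f <= i)%N -> qcoef P f i = 0.
Proof.
move=> hi; rewrite /qcoef divp_small ?mod0p // size_expP.
by move: hi P_gt1; move: (size f) (size P) => n1 n2; nia.
Qed.

Lemma qexpansion n (f : {poly K}) : (size f <= n)%N ->
  f = \sum_(i < n) qcoef P f i * P ^+ i.
Proof.
elim: n f => [|n IH] f hf.
  by rewrite big_ord0; apply/eqP; rewrite -size_poly_leq0.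
rewrite big_ord_recl expr0 mulr1 /qcoef expr0 divp1 -/(qcoef _ _ _).
have hs : (size (f %/ P)%R <= n)%N.
  rewrite size_divp ?P_neq0 //.
  by move: hf P_gt1; move: (size f) (size P) => n1 n2; lia.
rewrite {1}(divp_eq f P) addrC {1}(IH _ hs) big_distrl /=; congr (_ + _).
apply: eq_bigr => i _.
by rewrite /bump /= add1n -/(qcoef P f _) qcoefS exprSr mulrA.
Qed.

Lemma size_divp_mul (u v : {poly K}) : u != 0 -> v != 0 ->
  (size u < size P)%N -> (size v < size P)%N -> (size ((u * v) %/ P)%R < size P)%N.
Proof.
move=> u0 v0 us vs; rewrite size_divp ?P_neq0 // size_mul //.
by move: us vs P_gt1; move: (size u) (size v) (size P) => n1 n2 n3; lia.
Qed.

End Expansion.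

Section ValuedPolynomials.

Variables (G : zmodType) (le : rel G).
Hypothesis hG : is_oag le.

Definition olt (a b : G) : bool := ~~ le b a.

Lemma ole_refl a : le a a. Proof. exact: (oag_refl hG). Qed.
Lemma ole_anti a b : le a b -> le b a -> a = b. Proof. exact: (oag_antisym hG). Qed.
Lemma ole_trans a b c : le a b -> le b c -> le a c. Proof. exact: (oag_trans hG). Qed.
Lemma ole_total a b : le a b || le b a. Proof. exact: (oag_total hG). Qed.

Lemma oltW a b : olt a b -> le a b.
Proof. by rewrite /olt; case/orP: (ole_total a b) => ->. Qed.

Lemma olt_irr a : olt a a = false. Proof. by rewrite /olt ole_refl. Qed.

Lemma olt_le_trans a b c : olt a b -> le b c -> olt a c.
Proof. by move=> /negP ab bc; apply/negP => ca; apply: ab; apply: ole_trans bc ca. Qed.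

Lemma ole_lt_trans a b c : le a b -> olt b c -> olt a c.
Proof. by move=> ab /negP bc; apply/negP => ca; apply: bc; apply: ole_trans ca ab. Qed.

Lemma oleD2r a b c : le (a + c) (b + c) = le a b.
Proof.
apply/idP/idP; last exact: (oag_add hG).
by move/(oag_add hG (- c)); rewrite !addrK.
Qed.

Lemma oleD2l a b c : le (c + a) (c + b) = le a b.
Proof. by rewrite ![c + _]addrC oleD2r. Qed.

Lemma oltD2r a b c : olt (a + c) (b + c) = olt a b.
Proof. by rewrite /olt oleD2r. Qed.

Lemma oleD a b c d : le a b -> le c d -> le (a + c) (b + d).
Proof. by move=> ab cd; apply: (@ole_trans _ (b + c)); rewrite ?oleD2r ?oleD2l. Qed.

Lemma oltDl a b c d : olt a b -> le c d -> olt (a + c) (b + d).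
Proof. by move=> ab cd; apply: (@olt_le_trans _ (b + c)); rewrite ?oltD2r ?oleD2l. Qed.

Lemma oltDr a b c d : le a b -> olt c d -> olt (a + c) (b + d).
Proof. by move=> ab cd; rewrite addrC [b + _]addrC; apply: oltDl. Qed.

Lemma oleBl a b c : le (a - c) b = le a (b + c).
Proof. by rewrite -(oleD2r _ _ c) subrK. Qed.

Lemma oleBr a b c : le a (b - c) = le (a + c) b.
Proof. by rewrite -(oleD2r _ _ c) subrK. Qed.

Lemma oleMn a b n : le a b -> le (a *+ n) (b *+ n).
Proof. by move=> ab; elim: n => [|n IH]; rewrite ?ole_refl // !mulrS oleD. Qed.

Lemma oltMn a b n : olt a b -> (0 < n)%N -> olt (a *+ n) (b *+ n).
Proof.
move=> ab; case: n => // n _; elim: n => [|n IH]; first by rewrite !mulr1n.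
by rewrite mulrS [b *+ _]mulrS; apply: oltDl; rewrite ?oltW.
Qed.

Lemma oleMn2 a b n : (0 < n)%N -> le (a *+ n) (b *+ n) = le a b.
Proof.
move=> n0; apply/idP/idP => [h|]; last exact: oleMn.
by apply/negPn/negP => /oltMn /(_ n0); rewrite /olt h.
Qed.

Lemma oltMn2 a b n : (0 < n)%N -> olt (a *+ n) (b *+ n) = olt a b.
Proof. by move=> n0; rewrite /olt oleMn2. Qed.

(* torsion-freeness, used to get nu(-1) = 0 *)
Lemma double_eq0 (a : G) : a + a = 0 -> a = 0.
Proof.
move=> aa; case/orP: (ole_total a 0) => h; apply: ole_anti => //.
  by rewrite -(oleD2l _ _ a) aa addr0.
by rewrite -(oleD2l _ _ a) aa addr0.
Qed.

Lemma frac_le_trans x y z : (0 < y.2)%N ->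
  frac_le le x y -> frac_le le y z -> frac_le le x z.
Proof.
rewrite /frac_le => y0 xy yz; rewrite -(oleMn2 _ _ y0) -!mulrnA.
apply: (@ole_trans _ (y.1 *+ (x.2 * z.2)%N)).
  by have := oleMn z.2 xy; rewrite -!mulrnA mulnC.
by have := oleMn x.2 yz; rewrite -!mulrnA [(z.2 * _)%N]mulnC [(y.2 * _)%N]mulnC.
Qed.

Lemma frac_max (s : seq (G * nat)) : s != [::] -> all (fun x => 0 < x.2)%N s ->
  exists2 y, y \in s & forall x, x \in s -> frac_le le x y.
Proof.
elim: s => // a s IH _ /= /andP [a0 hs].
have [-> | sn] := eqVneq s [::].
  by exists a; rewrite ?mem_seq1 // => x; rewrite mem_seq1 => /eqP ->; apply: ole_refl.
have [y ys hy] := IH sn hs.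
case/orP: (ole_total (a.1 *+ y.2) (y.1 *+ a.2)) => hay.
  exists y => [|x]; first by rewrite in_cons ys orbT.
  by rewrite in_cons => /orP [/eqP -> //|]; apply: hy.
exists a => [|x]; first by rewrite in_cons eqxx.
rewrite in_cons => /orP [/eqP ->|xs]; first exact: ole_refl.
by apply: frac_le_trans (hy x xs) hay; move/allP: hs => /(_ y ys).
Qed.

Variables (K : fieldType) (nu : {poly K} -> G).
Hypothesis hnu : is_valuation le nu.

Lemma nuM (f g : {poly K}) : f != 0 -> g != 0 -> nu (f * g) = nu f + nu g.
Proof. exact: (val_mul hnu). Qed.

Lemma nu1 : nu 1 = 0.
Proof.
apply: (addrI (nu 1)); rewrite addr0 -nuM ?oner_neq0 //.
by rewrite mulr1.
Qed.

Lemma nuN (f : {poly K}) : nu (- f) = nu f.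
Proof.
have [->|f0] := eqVneq f 0; first by rewrite oppr0.
have N10 : (-1 : {poly K}) != 0 by rewrite oppr_eq0 oner_neq0.
have nuN1 : nu (-1) = 0 by apply: double_eq0; rewrite -nuM // mulrNN mulr1 nu1.
by rewrite -mulN1r nuM // nuN1 add0r.
Qed.

Lemma nuX (Q : {poly K}) n : Q != 0 -> nu (Q ^+ n) = nu Q *+ n.
Proof.
move=> Q0; elim: n => [|n IH]; first by rewrite expr0 nu1.
by rewrite exprS nuM ?expf_neq0 // IH mulrS.
Qed.

(* Scaled lower bounds on values, with nu(0) = oo: vge n c h means
   n * nu(h) >= c, and vgt n c h means n * nu(h) > c.  The scale n clears the
   denominator of a rational bound in Gamma'. *)
Definition vge n c (h : {poly K}) : Prop := h = 0 \/ le c (nu h *+ n).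
Definition vgt n c (h : {poly K}) : Prop := h = 0 \/ olt c (nu h *+ n).

Lemma vge1_le c h : vge 1 c h -> h != 0 -> le c (nu h).
Proof. by case=> [->|]; rewrite ?eqxx // mulr1n. Qed.

Lemma vge_refl h : vge 1 (nu h) h.
Proof. by right; rewrite mulr1n ole_refl. Qed.

Lemma vge_mono n c d h : le c d -> vge n d h -> vge n c h.
Proof. by move=> cd [->|dh]; [left | right; apply: ole_trans dh]. Qed.

Lemma vgt_mono n c d h : le c d -> vgt n d h -> vgt n c h.
Proof. by move=> cd [->|dh]; [left | right; apply: ole_lt_trans dh]. Qed.

Lemma vge_vgt n c d h : olt c d -> vge n d h -> vgt n c h.
Proof. by move=> cd [->|dh]; [left | right; apply: olt_le_trans dh]. Qed.

Lemma vgeN n c h : vge n c h -> vge n c (- h).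
Proof. by case=> [->|ch]; [left; rewrite oppr0 | right; rewrite nuN]. Qed.

Lemma vgtN n c h : vgt n c h -> vgt n c (- h).
Proof. by case=> [->|ch]; [left; rewrite oppr0 | right; rewrite nuN]. Qed.

Lemma val_addP f g : f != 0 -> g != 0 -> f + g != 0 ->
  le (nu f) (nu (f + g)) \/ le (nu g) (nu (f + g)).
Proof. by move=> f0 g0 fg0; apply/orP; apply: (val_add hnu). Qed.

Lemma vgeD n c f g : vge n c f -> vge n c g -> vge n c (f + g).
Proof.
case=> [->|cf]; first by rewrite add0r.
case=> [->|cg]; first by rewrite addr0; right.
have [fg0|fg0] := eqVneq (f + g) 0; first by left.
have [->|f0] := eqVneq f 0; first by rewrite add0r; right.
have [->|g0] := eqVneq g 0; first by rewrite addr0; right.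
right; case: (val_addP f0 g0 fg0) => /(oleMn n).
  exact: ole_trans cf.
exact: ole_trans cg.
Qed.

Lemma vgtD n c f g : vgt n c f -> vgt n c g -> vgt n c (f + g).
Proof.
case=> [->|cf]; first by rewrite add0r.
case=> [->|cg]; first by rewrite addr0; right.
have [fg0|fg0] := eqVneq (f + g) 0; first by left.
have [->|f0] := eqVneq f 0; first by rewrite add0r; right.
have [->|g0] := eqVneq g 0; first by rewrite addr0; right.
right; case: (val_addP f0 g0 fg0) => /(oleMn n).
  exact: olt_le_trans cf.
exact: olt_le_trans cg.
Qed.

Lemma vgt_sum n c m (F : 'I_m -> {poly K}) :
  (forall i, vgt n c (F i)) -> vgt n c (\sum_(i < m) F i).
Proof. by move=> hF; apply: (big_ind (vgt n c)) => //; [left | apply: vgtD]. Qed.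

Lemma vge_vgt_mul n c d f g : vge n c f -> vgt n d g -> vgt n (c + d) (f * g).
Proof.
case=> [->|cf]; first by rewrite mul0r; left.
case=> [->|dg]; first by rewrite mulr0; left.
have [->|f0] := eqVneq f 0; first by rewrite mul0r; left.
have [->|g0] := eqVneq g 0; first by rewrite mulr0; left.
by right; rewrite nuM // mulrnDl; apply: oltDr.
Qed.

Lemma vgt_vge_mul n c d f g : vgt n c f -> vge n d g -> vgt n (c + d) (f * g).
Proof. by move=> cf dg; rewrite mulrC addrC; apply: vge_vgt_mul. Qed.

Lemma val_dominant n c x y : x != 0 -> nu x *+ n = c -> vgt n c y ->
  x + y != 0 /\ nu (x + y) *+ n = c.
Proof.
move=> x0 hx [->|cy]; first by rewrite addr0.
have [y0|y0] := eqVneq y 0; first by rewrite y0 addr0.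
have xy0 : x + y != 0.
  apply: contraTneq cy => /eqP; rewrite addr_eq0 => /eqP xNy.
  by rewrite -(nuN y) -xNy hx olt_irr.
split=> //; apply: ole_anti.
  have ny0 : - y != 0 by rewrite oppr_eq0.
  have := val_addP xy0 ny0; rewrite addrK => /(_ x0) [xy_x | ny_x].
    by rewrite -hx oleMn.
  by move: cy; rewrite /olt -hx -(nuN y) (oleMn n ny_x).
rewrite -hx; case: (val_addP x0 y0 xy0) => /(oleMn n) // yxy.
by apply: oltW; apply: olt_le_trans yxy; rewrite -hx in cy.
Qed.

Lemma sum_term_le m (F : 'I_m -> {poly K}) : \sum_(i < m) F i != 0 ->
  exists i, F i != 0 /\ le (nu (F i)) (nu (\sum_(i < m) F i)).
Proof.
set s := \sum_(i < m) F i => s0.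
have [/existsP [i /andP [Fi0 Fis]] | /existsPn small] :=
  boolP [exists i, (F i != 0) && le (nu (F i)) (nu s)]; first by exists i.
have : vgt 1 (nu s) s.
  apply: vgt_sum => i; have [->|Fi0] := eqVneq (F i) 0; first by left.
  by right; move: (small i); rewrite Fi0 mulr1n /olt.
by case=> [/eqP|]; rewrite ?(negbTE s0) // mulr1n olt_irr.
Qed.

Lemma eps_cands_mem f k : (0 < k)%N -> f^`N(k) != 0 ->
  (nu f - nu f^`N(k), k) \in eps_cands nu f.
Proof.
move=> k0 fk; apply: map_f; rewrite mem_filter fk mem_iota k0 /= add1n.
case: (ltnP k (size f)) => [|/nderivn_poly0 fk0]; first by case: (size f).
by rewrite fk0 eqxx in fk.
Qed.

Lemma eps_candsP f x : x \in eps_cands nu f ->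
  (0 < x.2)%N /\ f^`N(x.2) != 0 /\ x.1 = nu f - nu f^`N(x.2).
Proof. by case/mapP=> k; rewrite mem_filter mem_iota => /and3P [? ? _] ->. Qed.

Lemma nderivn_lead (f : {poly K}) : (1 < size f)%N -> f^`N((size f).-1) != 0.
Proof.
move=> hf; apply: contraTneq hf => /(congr1 (fun p : {poly K} => p`_0)).
rewrite coef_nderivn addn0 binn mulr1n coef0 -lead_coefE => /eqP.
by rewrite lead_coef_eq0 => /eqP ->; rewrite size_poly0.
Qed.

Definition trunc_ge (P : {poly K}) (c : G) (f : {poly K}) : Prop :=
  forall i, vge 1 c (qcoef P f i * P ^+ i).

Section Truncation.
Variable P : {poly K}.
Hypothesis P_gt1 : (1 < size P)%N.

Lemma trunc_ge0 c : trunc_ge P c 0.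
Proof. by move=> i; rewrite qcoef0 mul0r; left. Qed.

Lemma trunc_geD c f g : trunc_ge P c f -> trunc_ge P c g -> trunc_ge P c (f + g).
Proof. by move=> hf hg i; rewrite qcoefD mulrDl; apply: vgeD. Qed.

Lemma trunc_ge_sum c m (F : 'I_m -> {poly K}) :
  (forall i, trunc_ge P c (F i)) -> trunc_ge P c (\sum_(i < m) F i).
Proof.
by move=> hF; apply: (big_ind (trunc_ge P c)) => //; [apply: trunc_ge0 | apply: trunc_geD].
Qed.

Lemma trunc_ge_mono c d f : le c d -> trunc_ge P d f -> trunc_ge P c f.
Proof. by move=> cd hf i; apply: vge_mono cd (hf i). Qed.

Lemma trunc_ge_monomial (a : {poly K}) n : (size a < size P)%N ->
  trunc_ge P (nu (a * P ^+ n)) (a * P ^+ n).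
Proof.
move=> a_small i; rewrite qcoef_monomial //.
by case: eqVneq => [->|_]; [apply: vge_refl | rewrite mul0r; left].
Qed.

Lemma trunc_ge_id : trunc_ge P (nu P) P.
Proof.
have := @trunc_ge_monomial 1 1; rewrite mul1r expr1; apply.
by rewrite size_poly1.
Qed.

Lemma trunc_ge_small c (a : {poly K}) : (size a < size P)%N -> vge 1 c a ->
  trunc_ge P c a.
Proof.
move=> a_small [->|ca]; first exact: trunc_ge0.
have := trunc_ge_monomial 0 a_small; rewrite expr0 mulr1.
by apply: trunc_ge_mono; rewrite -[nu a]mulr1n.
Qed.

End Truncation.

Section KeyPolynomial.
Variable P : {poly K}.
Hypothesis hP : key_poly le nu P.

Lemma key_gt1 : (1 < size P)%N. Proof. by case: hP => _ []. Qed.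

Lemma key_neq0 : P != 0. Proof. exact: P_neq0 key_gt1. Qed.

Definition eps_attained_at (A : G) (b : nat) : Prop :=
  [/\ (0 < b)%N, P^`N(b) != 0, A = nu P - nu P^`N(b) &
      forall x, x \in eps_cands nu P -> frac_le le x (A, b)].

Lemma key_eps_attained : exists A b, eps_attained_at A b.
Proof.
have cands_nil : eps_cands nu P != [::].
  have k0 : (0 < (size P).-1)%N by have := key_gt1; case: (size P) => // [[]].
  by have := eps_cands_mem k0 (nderivn_lead key_gt1); case: (eps_cands nu P).
have [y ys hy] := frac_max cands_nil (introT allP (fun x xs => (eps_candsP xs).1)).
have [y0 [Py ey]] := eps_candsP ys.
by exists y.1, y.2; split; rewrite // -ey -surjective_pairing.
Qed.

Section EpsilonBounds.
Variables (A : G) (b : nat).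
Hypothesis hAb : eps_attained_at A b.

Let b_gt0 : (0 < b)%N. Proof. by case: hAb. Qed.
Let Pb : P^`N(b) != 0. Proof. by case: hAb. Qed.
Let hA : A = nu P - nu P^`N(b). Proof. by case: hAb. Qed.
Let hmax : forall x, x \in eps_cands nu P -> frac_le le x (A, b).
Proof. by case: hAb. Qed.

(* maximality of eps(P): nu(d_k P) >= nu P - k eps(P) *)
Lemma nderiv_key_ge k : vge b (nu P *+ b - A *+ k) P^`N(k).
Proof.
case: k => [|k]; first by right; rewrite nderivn0 mulr0n subr0 ole_refl.
have [->|Pk] := eqVneq P^`N(k.+1) 0; first by left.
right; have := hmax (eps_cands_mem (ltn0Sn k) Pk); rewrite /frac_le /= mulrnBl.
by rewrite !oleBl [A *+ _ + _]addrC.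
Qed.

(* the key property: a polynomial h of smaller degree has eps(h) < eps(P),
   i.e. nu(d_k h) > nu h - k eps(P) for all k > 0 *)
Lemma nderiv_small_gt (h : {poly K}) k : (size h < size P)%N -> (0 < k)%N ->
  vgt b (nu h *+ b - A *+ k) h^`N(k).
Proof.
move=> h_small k0; have [->|hk] := eqVneq h^`N(k) 0; first by left.
right; apply/negP => hle.
have k_lt : (k < size h)%N.
  by case: (ltnP k (size h)) => // /nderivn_poly0 hk0; rewrite hk0 eqxx in hk.
case: hP => _ [_ hkey]; move: h_small; rewrite ltnNge hkey //; first by lia.
exists (nu h - nu h^`N(k), k); first exact: eps_cands_mem.
move=> x xc; apply: (@frac_le_trans _ (A, b) _ b_gt0 (hmax xc)).
by rewrite /frac_le /= mulrnBl oleBr addrC -oleBr.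
Qed.

Lemma nderiv_small_ge (h : {poly K}) k : (size h < size P)%N ->
  vge b (nu h *+ b - A *+ k) h^`N(k).
Proof.
move=> h_small; case: k => [|k]; first by right; rewrite nderivn0 mulr0n subr0 ole_refl.
by case: (nderiv_small_gt h_small (ltn0Sn k)) => [->|]; [left | right; apply: oltW].
Qed.

Lemma scaled_split (x y : G) j : (j <= b)%N ->
  (x + y) *+ b - A *+ b = (x *+ b - A *+ j) + (y *+ b - A *+ (b - j)).
Proof.
move=> jb; have -> : A *+ b = A *+ j + A *+ (b - j) by rewrite -mulrnDr subnKC.
by rewrite mulrnDl opprD addrACA.
Qed.

Lemma nderiv_prod_small_gt (u v : {poly K}) : u != 0 -> v != 0 ->
  (size u < size P)%N -> (size v < size P)%N ->
  vgt b (nu (u * v) *+ b - A *+ b) (u * v)^`N(b).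
Proof.
move=> u0 v0 us vs; rewrite nderivnM nuM //; apply: vgt_sum => j.
have jb : (j <= b)%N by rewrite -ltnS.
rewrite (scaled_split _ _ jb).
have [j0|j0] := eqVneq (nat_of_ord j) 0%N.
  apply: vge_vgt_mul; first exact: nderiv_small_ge.
  by apply: nderiv_small_gt; rewrite // j0 subn0.
apply: vgt_vge_mul; last exact: nderiv_small_ge.
by apply: nderiv_small_gt; rewrite // lt0n.
Qed.

(* by contrast, for q of smaller degree, d_b(qP) has the extremal value
   nu(qP) - b eps(P), carried by its term q d_b P *)
Lemma nderiv_mul_key (q : {poly K}) : q != 0 -> (size q < size P)%N ->
  (q * P)^`N(b) != 0 /\ nu (q * P)^`N(b) *+ b = nu (q * P) *+ b - A *+ b.
Proof.
move=> q0 q_small; have P0 := key_neq0.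
rewrite nderivnM big_ord_recl nderivn0 subn0; apply: val_dominant.
- by rewrite mulf_neq0.
- by rewrite !nuM // !mulrnDl hA mulrnBl opprB addrA addrAC addrK.
apply: vgt_sum => j; rewrite nuM // (scaled_split _ _ (_ : (j.+1 <= b)%N)) //.
apply: vgt_vge_mul; last exact: nderiv_key_ge.
exact: nderiv_small_gt.
Qed.

Lemma quot_val_gt (u v : {poly K}) : u != 0 -> v != 0 ->
  (size u < size P)%N -> (size v < size P)%N -> (u * v) %/ P != 0 ->
  olt (nu (u * v)) (nu ((u * v) %/ P * P)).
Proof.
move=> u0 v0 us vs q0; set q := (u * v) %/ P; set r := (u * v) %% P.
have uv_eq : u * v = q * P + r := divp_eq _ _.
apply/negP => qP_le.
have [qP_b0 qP_b] := nderiv_mul_key q0 (size_divp_mul key_gt1 u0 v0 us vs).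
set c := nu (q * P) *+ b - A *+ b in qP_b.
have le_c x : le (nu (q * P)) x -> le c (x *+ b - A *+ b).
  by move=> qx; rewrite oleD2r oleMn2.
have uv_b : vgt b c (u * v)^`N(b).
  exact: vgt_mono (le_c _ qP_le) (nderiv_prod_small_gt u0 v0 us vs).
have r_b : vgt b c r^`N(b).
  have [r0|r0] := eqVneq r 0; first by rewrite r0 nderivn_poly0 ?size_poly0 //; left.
  have r_ge : vge 1 (nu (q * P)) r.
    have -> : r = u * v - q * P by rewrite uv_eq addrAC subrr add0r.
    apply: vgeD; last exact/vgeN/vge_refl.
    by right; rewrite mulr1n.
  have r_small : (size r < size P)%N by rewrite ltn_modp key_neq0.
  exact: vgt_mono (le_c _ (vge1_le r_ge r0)) (nderiv_small_gt r_small b_gt0).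
have : vgt b c (q * P)^`N(b).
  have -> : q * P = u * v - r by rewrite uv_eq addrK.
  by rewrite nderivnB; apply: vgtD uv_b (vgtN r_b).
by case=> [/eqP|]; rewrite ?(negbTE qP_b0) // qP_b olt_irr.
Qed.

Lemma rem_val_eq (u v : {poly K}) : u != 0 -> v != 0 ->
  (size u < size P)%N -> (size v < size P)%N ->
  (u * v) %% P != 0 /\ nu ((u * v) %% P) = nu (u * v).
Proof.
move=> u0 v0 us vs; set q := (u * v) %/ P.
have -> : (u * v) %% P = u * v + - (q * P).
  by rewrite {2}(divp_eq (u * v) P) -/q addrAC subrr add0r.
have [q0|q0] := eqVneq q 0; first by rewrite q0 mul0r oppr0 addr0 mulf_neq0.
have qP_gt : vgt 1 (nu (u * v)) (- (q * P)).
  by right; rewrite nuN mulr1n; apply: quot_val_gt.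
by have [? ] := val_dominant (mulf_neq0 u0 v0) (mulr1n _) qP_gt; rewrite mulr1n.
Qed.

End EpsilonBounds.

(* nu_P is super-multiplicative on products of two terms a P^i, a' P^j:
   a a' = q P + r splits the product into r P^(i+j), of the expected value,
   and q P^(i+j+1), of larger value *)
Lemma trunc_ge_monomialM (a a' : {poly K}) i j :
  (size a < size P)%N -> (size a' < size P)%N ->
  trunc_ge P (nu (a * P ^+ i) + nu (a' * P ^+ j)) (a * P ^+ i * (a' * P ^+ j)).
Proof.
move=> a_small a'_small; have [A [b hAb]] := key_eps_attained.
have Pn := expP_neq0 key_gt1.
have [->|a0] := eqVneq a 0; first by rewrite !mul0r; apply: trunc_ge0.
have [->|a'0] := eqVneq a' 0; first by rewrite !mul0r mulr0; apply: trunc_ge0.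
have [r0 hr] := rem_val_eq hAb a0 a'0 a_small a'_small.
set q := (a * a') %/ P; set r := (a * a') %% P in r0 hr *.
have -> : a * P ^+ i * (a' * P ^+ j) = r * P ^+ (i + j) + q * P ^+ (i + j).+1.
  by rewrite mulrACA -exprD {1}(divp_eq (a * a') P) mulrDl addrC exprS mulrA.
have -> : nu (a * P ^+ i) + nu (a' * P ^+ j) = nu (a * a') + nu (P ^+ (i + j)).
  rewrite -(nuM (mulf_neq0 a0 (Pn i)) (mulf_neq0 a'0 (Pn j))).
  by rewrite -(nuM (mulf_neq0 a0 a'0) (Pn _)) mulrACA -exprD.
apply: trunc_geD.
  have r_small : (size r < size P)%N by rewrite ltn_modp key_neq0.
  by have := trunc_ge_monomial key_gt1 (i + j) r_small; rewrite nuM // hr.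
have [->|q0] := eqVneq q 0; first by rewrite mul0r; apply: trunc_ge0.
have q_small := size_divp_mul key_gt1 a0 a'0 a_small a'_small.
apply: trunc_ge_mono (trunc_ge_monomial key_gt1 _ q_small).
rewrite exprS mulrA (nuM (mulf_neq0 q0 key_neq0) (Pn _)); apply: oltW.
by rewrite oltD2r; apply: (quot_val_gt hAb).
Qed.

Lemma trunc_geM c d f g : trunc_ge P c f -> trunc_ge P d g -> trunc_ge P (c + d) (f * g).
Proof.
move=> hf hg; rewrite (qexpansion key_gt1 (leqnn (size f))).
rewrite (qexpansion key_gt1 (leqnn (size g))) big_distrl /=.
apply: trunc_ge_sum => i; rewrite big_distrr /=; apply: trunc_ge_sum => j.
have [->|fi0] := eqVneq (qcoef P f i * P ^+ i) 0; first by rewrite mul0r; apply: trunc_ge0.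
have [->|gj0] := eqVneq (qcoef P g j * P ^+ j) 0; first by rewrite mulr0; apply: trunc_ge0.
apply: trunc_ge_mono (oleD (vge1_le (hf i) fi0) (vge1_le (hg j) gj0)) _.
by apply: trunc_ge_monomialM; apply: (size_qcoef key_gt1).
Qed.

Lemma trunc_ge_expn c (g : {poly K}) n : trunc_ge P c g -> trunc_ge P (c *+ n) (g ^+ n).
Proof.
move=> hg; elim: n => [|n IH]; last by rewrite exprS mulrS; apply: trunc_geM.
rewrite expr0 mulr0n -nu1; apply: (trunc_ge_small key_gt1); last exact: vge_refl.
by rewrite size_poly1 key_gt1.
Qed.

Lemma eps_perturb (h : {poly K}) : (size h < size P)%N -> h != 0 ->
  olt (nu h) (nu P) -> ~ eps_le le nu P (P - h).
Proof.
move=> h_small h0 h_lt [y ys hy]; have [A [b hAb]] := key_eps_attained.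
have [b0 Pb hA _] := hAb.
have [y0 [Phy ey]] := eps_candsP ys; set k := y.2 in y0 Phy ey.
have nu_Ph : nu (P - h) = nu h.
  have P_gt : vgt 1 (nu h) P by right; rewrite mulr1n.
  have := val_dominant (_ : - h != 0) (_ : nu (- h) *+ 1 = nu h) P_gt.
  by rewrite addrC mulr1n oppr_eq0 nuN mulr1n => /(_ h0 erefl) [].
have : vgt b (nu h *+ b - A *+ k) (P - h)^`N(k).
  rewrite nderivnB; apply: vgtD.
    by apply: vge_vgt (nderiv_key_ge hAb k); rewrite oltD2r oltMn2.
  exact: vgtN (nderiv_small_gt hAb h_small y0).
case=> [/eqP|]; rewrite ?(negbTE Phy) // /olt.
have := hy _ (eps_cands_mem b0 Pb); rewrite -hA /frac_le ey nu_Ph /= mulrnBl.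
by rewrite oleBr addrC -oleBr => ->.
Qed.

End KeyPolynomial.

Section KeyPair.
Variables Q Q' : {poly K}.
Hypotheses (hQ : key_poly le nu Q) (hQ' : key_poly le nu Q')
  (heps : eps_le le nu Q Q').

Lemma key_pair_size : (size Q <= size Q')%N.
Proof. by case: hQ => _ [_ hkey]; apply: hkey => //; apply: key_gt1. Qed.

Lemma key_pair_trunc_ge : trunc_ge Q' (nu Q) Q.
Proof.
have Q'_gt1 := key_gt1 hQ'; case: ltngtP key_pair_size => // [lt_QQ' _|eq_QQ' _].
  exact: trunc_ge_small (vge_refl Q).
set h := Q - Q'.
have h_small : (size h < size Q')%N.
  by apply: size_monic_sub; [case: hQ | case: hQ' | ].
have h_ge : vge 1 (nu Q) h.
  have [->|h0] := eqVneq h 0; [by left | right; rewrite mulr1n].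
  apply/negP => /negP h_lt; apply: (eps_perturb hQ _ h0 h_lt); first by rewrite eq_QQ'.
  by rewrite /h opprB addrC subrK.
have Q'_ge : vge 1 (nu Q) Q'.
  have -> : Q' = Q - h by rewrite /h opprB addrC subrK.
  exact: vgeD (vge_refl Q) (vgeN h_ge).
suff : trunc_ge Q' (nu Q) (Q' + h) by rewrite /h addrC subrK.
apply: trunc_geD.
  by apply: trunc_ge_mono (vge1_le Q'_ge (key_neq0 hQ')) (trunc_ge_id Q'_gt1).
exact: trunc_ge_small.
Qed.

Lemma trunc_ge_transfer c f : trunc_ge Q c f -> trunc_ge Q' c f.
Proof.
move=> hf; have Q_gt1 := key_gt1 hQ.
rewrite (qexpansion Q_gt1 (leqnn (size f))); apply: trunc_ge_sum => i.
set a := qcoef Q f i.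
have [a0|] := eqVneq (a * Q ^+ i) 0; first by rewrite a0; apply: trunc_ge0.
move=> /[dup] aQ0; rewrite mulf_eq0 negb_or => /andP [a0 Qi0].
have a_small : (size a < size Q')%N.
  exact: leq_trans (size_qcoef Q_gt1 f i) key_pair_size.
apply: trunc_ge_mono (vge1_le (hf i) aQ0) _.
rewrite nuM // (nuX _ (key_neq0 hQ)); apply: (trunc_geM hQ').
  exact: trunc_ge_small (key_gt1 hQ') _ _ a_small (vge_refl a).
exact: trunc_ge_expn hQ' _ _ i key_pair_trunc_ge.
Qed.

End KeyPair.

Definition min_val (s : seq {poly K}) : option G :=
  foldr (fun g acc => Some (match acc with None => nu g | Some a => minG le (nu g) a end))
    None s.

Definition qterms (P f : {poly K}) : seq {poly K} :=
  [seq qcoef P f i * P ^+ i | i <- iota 0 (size f) & qcoef P f i != 0].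

Lemma nuQE (P f : {poly K}) : nuQ le nu P f = min_val (qterms P f). Proof. by []. Qed.

Lemma minG_le a b : le (minG le a b) a /\ le (minG le a b) b.
Proof.
rewrite /minG; case: ifP => ab; split; rewrite ?ole_refl //.
by have := ole_total a b; rewrite ab.
Qed.

Lemma min_val_le s m : min_val s = Some m -> forall x, x \in s -> le m (nu x).
Proof.
elim: s m => // y s IH m /=; case e: (min_val s) => [a|] [<-] x.
  have [my ma] := minG_le (nu y) a.
  by rewrite in_cons => /orP [/eqP ->|/(IH _ e)]; last apply: ole_trans.
by case: s e {IH} => // _; rewrite mem_seq1 => /eqP ->; apply: ole_refl.
Qed.

Lemma min_val_attained s m : min_val s = Some m -> exists2 x, x \in s & m = nu x.
Proof.
elim: s m => // y s IH m /=; case e: (min_val s) => [a|] [<-].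
  rewrite /minG; case: ifP => _; first by exists y; rewrite ?mem_head.
  by have [x xs ->] := IH _ e; exists x; rewrite // in_cons xs orbT.
by exists y; rewrite ?mem_head.
Qed.

Lemma nuQ_trunc_ge (P f : {poly K}) c : (1 < size P)%N ->
  nuQ le nu P f = Some c -> trunc_ge P c f.
Proof.
move=> P_gt1 hf i; have [->|qi0] := eqVneq (qcoef P f i) 0; first by rewrite mul0r; left.
have i_lt : (i < size f)%N.
  by rewrite ltnNge; move: qi0; apply: contra => /(qcoef_eq0 P_gt1) ->.
right; rewrite mulr1n; apply: min_val_le hf _ _.
by apply: map_f; rewrite mem_filter qi0 mem_iota.
Qed.

(* nu_P(f) <= nu(f), so a lower bound nu(f) on nu_P(f) is attained *)
Lemma nuQ_eq_nu (P f : {poly K}) : (1 < size P)%N -> f != 0 ->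
  trunc_ge P (nu f) f -> nuQ le nu P f = Some (nu f).
Proof.
move=> P_gt1 f0 hf; rewrite nuQE.
have f_eq := qexpansion P_gt1 (leqnn (size f)).
have := f0; rewrite {1}f_eq => /sum_term_le [i [ti0 ti_le]].
have ti_in : qcoef P f i * P ^+ i \in qterms P f.
  apply: map_f; rewrite mem_filter mem_iota leq0n add0n ltn_ord !andbT.
  by move: ti0; apply: contra_neq => ->; rewrite mul0r.
case e: (min_val _) => [m|]; last by case: (qterms P f) e ti_in.
congr Some; apply: ole_anti.
  by apply: ole_trans (min_val_le e ti_in) _; rewrite -f_eq in ti_le.
have [x /mapP [j]] := min_val_attained e.
rewrite mem_filter => /andP [qj0 _] -> ->.
by apply: vge1_le (hf j) _; rewrite mulf_neq0 ?expP_neq0.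
Qed.

End ValuedPolynomials.

Theorem corollary4p8 (K : fieldType) (G : zmodType) (le : rel G)
  (nu : {poly K} -> G) (hG : is_oag le) (hnu : is_valuation le nu)
  (Q Q' : {poly K}) (hQ : key_poly le nu Q) (hQ' : key_poly le nu Q')
  (heps : eps_le le nu Q Q') (f : {poly K}) :
  nuQ le nu Q f = nuext nu f -> nuQ le nu Q' f = nuext nu f.
Proof.
have [->|f0] := eqVneq f 0; first by rewrite /nuQ /nuext size_poly0 eqxx.
rewrite /nuext (negbTE f0) => hQf.
apply: (nuQ_eq_nu hG hnu (key_gt1 hQ') f0).
apply: (trunc_ge_transfer hG hnu hQ hQ' heps).
exact: (nuQ_trunc_ge hG (key_gt1 hQ) hQf).
Qed.
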